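(* In the setting below, for $n$ participants, the protocol consisting of the setup phase, the merged round and the recovery round is correct, i.e. at the end every participant's balance is $0$ (and the shared address is empty), and, apart from the setup, it uses exactly $2\cdot n+1$ transactions.
   Context: Setting (Conspiracy Santa). There are $n$ participants $P_1,\dots,P_n$. For each participant, the other $n-1$ participants form a group, choose a gift for him, one or more of them buy it, and its value is shared equally among the group members (more generally, expenses are shared within exchange groups). All participants know a fixed integer upper bound $B>0$ (in cents) on the value of any gift. Setup phase: payments in each group are broadcast within the group; each member computes the in-group share (group total divided by group size); each participant sums his in-group shares and subtracts his own expenses, obtaining his balance $p_i$, an integer number of cents (shares may be unevenly split up to one cent). Thus $\sum_i p_i=0$; $p_i>0$ means $P_i$ owes money, $p_i<0$ means $P_i$ is owed money. Sending $x$ cents decreases the sender's balance by $x$ and increases the receiver's by $x$. Participants create anonymous cryptocurrency addresses and one shared anonymous address (piggy bank) whose key all know. $x\bmod B\in\{0,\dots,B-1\}$. Merged round (private transactions on secure channels, except the last): $P_1$ samples $t_1$ uniformly in $\{0,\dots,B-1\}$, sets $p_1\leftarrow p_1-1-t_1$, sends $1+t_1$ cents to $P_2$, who adds it to $p_2$. For $i=2,\dots,n$: $P_i$ sets $t_i=(p_i-1)\bmod B$, sets $p_i\leftarrow p_i-1-t_i-(i-1)B$ and sends $1+t_i+(i-1)B$ cents to $P_{i+1}$ (where $P_{n+1}=P_1$), who adds it to his balance. Finally $P_1$ sends $nB$ cents to the shared address (a public transaction), updating his balance accordingly. Recovery round: every $P_i$ with $p_i<0$ makes, $-p_i/B$ times,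 the shared address pay $B$ cents to one of his own (distinct) anonymous addresses, then sets $p_i\leftarrow 0$.
   Formalization: The balances $p_i$ after the setup phase also satisfy $p_i \le B$ for every participant, so nobody owes more than the gift bound B. The statement above fails without it. *)

(* integers (cents) are Z, participants are 0..n-1
   (index i corresponds to P_(i+1) in the paper). *)
From Stdlib Require Import ZArith List.
Import ListNotations.
Open Scope Z_scope.

Inductive tx : Type :=
| Priv (snd rcv : nat) (x : Z)
| ToShared (snd : nat) (x : Z)
| FromShared (rcv : nat) (x : Z) (* shared address pays x cents to an anonymous address of rcv *).

Record state : Type := mkState {
  bal : nat -> Z;
  shared : Z;
  log : list tx
}.

Definition exec (t : tx) (s : state) : state :=
  match t with
  | Priv a b x =>
      mkState (fun j => bal s j - (if Nat.eqb j a then x else 0)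
                                + (if Nat.eqb j b then x else 0))
              (shared s) (log s ++ [t])
  | ToShared a x =>
      mkState (fun j => bal s j - (if Nat.eqb j a then x else 0))
              (shared s + x) (log s ++ [t])
  | FromShared b x =>
      mkState (fun j => bal s j + (if Nat.eqb j b then x else 0))
              (shared s - x) (log s ++ [t])
  end.

Definition next (n i : nat) : nat := if Nat.eqb (S i) n then 0%nat else S i.

Definition merged_step (n : nat) (B : Z) (s : state) (i : nat) : state :=
  let t := (bal s i - 1) mod B in
  exec (Priv i (next n i) (1 + t + Z.of_nat i * B)) s.

(* Merged round, given P_1's random sample t1. *)
Definition merged_round (n : nat) (B t1 : Z) (s : state) : state :=
  let s1 := exec (Priv 0 (next n 0) (1 + t1)) s in
  let s2 := fold_left (merged_step n B) (seq 1 (n - 1)) s1 in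
  exec (ToShared 0 (Z.of_nat n * B)) s2.

Definition recovery_step (B : Z) (s : state) (i : nat) : state :=
  if bal s i <? 0
  then Nat.iter (Z.to_nat (- bal s i / B)) (exec (FromShared i B)) s
  else s.

Definition recovery_round (n : nat) (B : Z) (s : state) : state :=
  fold_left (recovery_step B) (seq 0 n) s.

Definition initial (p : nat -> Z) : state := mkState p 0 [].

Definition protocol (n : nat) (B t1 : Z) (p : nat -> Z) : state :=
  recovery_round n B (merged_round n B t1 (initial p)).

Definition setup_balances (n : nat) (B : Z) (p : nat -> Z) : Prop :=
  fold_right Z.add 0 (map p (seq 0 n)) = 0 /\
  (forall i, (i < n)%nat -> p i <= B).

From Stdlib Require Import ZArith List Lia.
Open Scope Z_scope.

(* In the merged round, P_i (i >= 2) receives a payment 1 + t + (i-2)B with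
   0 <= t < B and forwards 1 + t_i + (i-1)B, where t_i = (p_i - 1) mod B makes
   his remaining balance a multiple of B; as p_i <= B, that multiple is <= 0.
   P_1 ends below B, and since money is conserved (sum p_i = 0 and nB went to
   the shared address) his balance is a multiple of B too.  So all balances are
   -k_i B with sum k_i = n: the recovery round empties the shared address with n
   withdrawals, which added to the n + 1 transactions of the merged round gives
   2n + 1. *)

Definition sumZ (f : nat -> Z) (l : list nat) : Z := fold_right Z.add 0 (map f l).

Lemma sumZ_cons f a l : sumZ f (a :: l) = f a + sumZ f l.
Proof. reflexivity. Qed.

Lemma sumZ_add f g l : sumZ (fun j => f j + g j) l = sumZ f l + sumZ g l.
Proof. induction l as [|a l IH]; rewrite ?sumZ_cons; [reflexivity | lia]. Qed.

Lemma sumZ_sub f g l : sumZ (fun j => f j - g j) l = sumZ f l - sumZ g l.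
Proof. induction l as [|a l IH]; rewrite ?sumZ_cons; [reflexivity | lia]. Qed.

Lemma sumZ_ext f g l : (forall j, In j l -> f j = g j) -> sumZ f l = sumZ g l.
Proof. intros Hfg; unfold sumZ; f_equal; apply map_ext_in, Hfg. Qed.

Lemma sumZ_divide d f l : (forall j, In j l -> (d | f j)) -> (d | sumZ f l).
Proof.
  induction l as [|a l IH]; intros Hd; [apply Z.divide_0_r|].
  rewrite sumZ_cons; apply Z.divide_add_r; [apply Hd; left | apply IH; intros j Hj; apply Hd; right]; auto.
Qed.

Lemma sumZ_indicator a x st c :
  sumZ (fun j => if Nat.eqb j a then x else 0) (seq st c)
  = if (Nat.leb st a && Nat.ltb a (st + c))%bool then x else 0.
Proof.
  revert st; induction c as [|c IH]; intros st; cbn [seq].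
  - destruct (Nat.leb_spec st a), (Nat.ltb_spec a (st + 0)); cbn; lia.
  - rewrite sumZ_cons, IH.
    destruct (Nat.eqb_spec st a), (Nat.leb_spec (S st) a), (Nat.ltb_spec a (S st + c)),
      (Nat.leb_spec st a), (Nat.ltb_spec a (st + S c)); cbn; lia.
Qed.

Definition total (n : nat) (s : state) : Z := sumZ (bal s) (seq 0 n) + shared s.

Lemma total_exec_Priv n a b x s :
  (a < n)%nat -> (b < n)%nat -> total n (exec (Priv a b x) s) = total n s.
Proof.
  intros Ha Hb; unfold total; cbn [exec bal shared].
  rewrite sumZ_add, sumZ_sub, !sumZ_indicator.
  destruct (Nat.ltb_spec a (0 + n)), (Nat.ltb_spec b (0 + n)); cbn; lia.
Qed.

Lemma total_exec_ToShared n a x s :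
  (a < n)%nat -> total n (exec (ToShared a x) s) = total n s.
Proof.
  intros Ha; unfold total; cbn [exec bal shared].
  rewrite sumZ_sub, sumZ_indicator.
  destruct (Nat.ltb_spec a (0 + n)); cbn; lia.
Qed.

Lemma length_log_exec t s : length (log (exec t s)) = S (length (log s)).
Proof. destruct t; cbn [exec log]; rewrite length_app; cbn; lia. Qed.

Lemma next_lt n i : (i < n)%nat -> (next n i < n)%nat.
Proof. unfold next; destruct (Nat.eqb_spec (S i) n); lia. Qed.

Lemma next_succ n i : (S i < n)%nat -> next n i = S i.
Proof. unfold next; destruct (Nat.eqb_spec (S i) n); lia. Qed.

Lemma next_last n i : S i = n -> next n i = 0%nat.
Proof. unfold next; destruct (Nat.eqb_spec (S i) n); lia. Qed.

Lemma merged_steps_frame n B l s :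
  (forall i, In i l -> (i < n)%nat) ->
  total n (fold_left (merged_step n B) l s) = total n s /\
  shared (fold_left (merged_step n B) l s) = shared s /\
  length (log (fold_left (merged_step n B) l s)) = (length (log s) + length l)%nat.
Proof.
  revert s; induction l as [|i l IH]; intros s Hl; cbn [fold_left length].
  - repeat split; lia.
  - destruct (IH (merged_step n B s i)) as (Htot & Hsh & Hlen).
    { intros j Hj; apply Hl; right; exact Hj. }
    assert (Hi : (i < n)%nat) by (apply Hl; left; reflexivity).
    rewrite Htot, Hsh, Hlen; unfold merged_step.
    rewrite length_log_exec, total_exec_Priv by auto using next_lt.
    repeat split; lia.
Qed.

(* x = 1 + t + i*B with 0 <= t < B: the shape of the payment forwarded by P_(i+1). *)
Definition in_window (B : Z) (i : nat) (x : Z) : Prop :=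
  1 + Z.of_nat i * B <= x < 1 + Z.of_nat i * B + B.

Definition recoverable (B z : Z) : Prop := z <= 0 /\ (B | z).

Lemma payment_in_window B i z : 0 < B -> in_window B i (1 + z mod B + Z.of_nat i * B).
Proof. intros HB; pose proof (Z.mod_pos_bound z B HB); unfold in_window; lia. Qed.

Lemma residue_recoverable B q x (k : nat) :
  0 < B -> q <= B -> in_window B k x ->
  recoverable B (q + x - (1 + (q + x - 1) mod B + Z.of_nat (S k) * B)).
Proof.
  intros HB Hq Hx; unfold in_window in Hx.
  remember (q + x - 1) as v eqn:Ev.
  pose proof (Z.div_mod v B ltac:(lia)) as Hv.
  assert (Hquot : v / B <= Z.of_nat (S k)).
  { apply Z.lt_succ_r, Z.div_lt_upper_bound; [exact HB|]. rewrite Nat2Z.inj_succ; lia. }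
  replace (q + x - (1 + v mod B + Z.of_nat (S k) * B)) with ((v / B - Z.of_nat (S k)) * B) by lia.
  split; [nia | apply Z.divide_factor_r].
Qed.

Lemma divide_lt_nonpos d z : 0 < d -> (d | z) -> z < d -> z <= 0.
Proof. intros Hd [q ->] Hlt; assert (q < 1) by nia; nia. Qed.

Section MergedRound.

Variables (n : nat) (B t1 : Z) (p : nat -> Z).
Hypothesis n_ge2 : (2 <= n)%nat.
Hypothesis B_pos : 0 < B.
Hypothesis p_le_B : forall i, (i < n)%nat -> p i <= B.
Hypothesis t1_range : 0 <= t1 < B.

Let opening : state := exec (Priv 0 (next n 0) (1 + t1)) (initial p).
Let prefix (k : nat) : state := fold_left (merged_step n B) (seq 1 k) opening.
Let merged : state := merged_round n B t1 (initial p).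

Lemma merged_prefix k : (k <= n - 2)%nat ->
  (exists x, in_window B k x /\ bal (prefix k) (S k) = p (S k) + x) /\
  bal (prefix k) 0 = p 0%nat - 1 - t1 /\
  (forall j, (1 <= j <= k)%nat -> recoverable B (bal (prefix k) j)) /\
  (forall j, (S k < j)%nat -> bal (prefix k) j = p j).
Proof.
  induction k as [|k IH]; intros Hk.
  - unfold prefix, opening; cbn [seq fold_left]; rewrite next_succ by lia.
    cbn [exec bal initial].
    split; [exists (1 + t1); split; [unfold in_window | cbn [Nat.eqb]]; lia|].
    split; [cbn [Nat.eqb]; lia|].
    split; [intros; lia|].
    intros [|[|j]] Hj; cbn [Nat.eqb]; lia.
  - destruct (IH ltac:(lia)) as ([x [Hx Hin]] & H0 & Hdone & Hrest).
    assert (Hstep : prefix (S k) = merged_step n B (prefix k) (S k)).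
    { unfold prefix; rewrite seq_S, fold_left_app; reflexivity. }
    rewrite Hstep; unfold merged_step; cbv zeta.
    rewrite Hin, next_succ by lia.
    set (y := 1 + (p (S k) + x - 1) mod B + Z.of_nat (S k) * B).
    cbn [exec bal].
    split; [|split; [|split]].
    + exists y; split; [apply payment_in_window, B_pos|].
      rewrite Hrest, Nat.eqb_refl by lia.
      destruct (Nat.eqb_spec (S (S k)) (S k)); lia.
    + rewrite H0; cbn [Nat.eqb]; lia.
    + intros j Hj; destruct (Nat.eqb_spec j (S k)) as [->|]; cbn iota.
      * destruct (Nat.eqb_spec (S k) (S (S k))); [lia|].
        rewrite Hin, Z.add_0_r.
        apply residue_recoverable; [exact B_pos | apply p_le_B; lia | exact Hx].
      * destruct (Nat.eqb_spec j (S (S k))); [lia|].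
        rewrite Z.sub_0_r, Z.add_0_r; apply Hdone; lia.
    + intros j Hj; destruct (Nat.eqb_spec j (S k)), (Nat.eqb_spec j (S (S k))); try lia.
      rewrite Hrest by lia; lia.
Qed.

Lemma merged_round_last_steps :
  merged = exec (ToShared 0 (Z.of_nat n * B)) (merged_step n B (prefix (n - 2)) (S (n - 2))).
Proof.
  unfold merged, merged_round, prefix, opening.
  replace (n - 1)%nat with (S (n - 2)) by lia.
  rewrite seq_S, fold_left_app; reflexivity.
Qed.

Lemma merged_round_balances :
  (forall j, (1 <= j < n)%nat -> recoverable B (bal merged j)) /\ bal merged 0 < B.
Proof.
  destruct (merged_prefix (n - 2) ltac:(lia)) as ([x [Hx Hin]] & H0 & Hdone & _).
  rewrite merged_round_last_steps; unfold merged_step; cbv zeta.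
  rewrite Hin, next_last by lia.
  pose proof (payment_in_window B (S (n - 2)) (p (S (n - 2)) + x - 1) B_pos) as Hy.
  set (y := 1 + (p (S (n - 2)) + x - 1) mod B + Z.of_nat (S (n - 2)) * B) in *.
  cbn [exec bal].
  split.
  - intros j Hj; destruct (Nat.eqb_spec j 0); [lia|].
    destruct (Nat.eqb_spec j (S (n - 2))) as [->|]; cbn iota.
    + rewrite Hin, !Z.sub_0_r, Z.add_0_r.
      apply residue_recoverable; [exact B_pos | apply p_le_B; lia | exact Hx].
    + rewrite !Z.sub_0_r, Z.add_0_r; apply Hdone; lia.
  - rewrite H0; cbn [Nat.eqb]; unfold in_window in Hy.
    pose proof (p_le_B 0 ltac:(lia)).
    replace (Z.of_nat n) with (Z.of_nat (S (n - 2)) + 1) by lia.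
    nia.
Qed.

Lemma merged_round_frame :
  total n merged = total n (initial p) /\ shared merged = Z.of_nat n * B /\
  length (log merged) = S n.
Proof.
  unfold merged, merged_round; cbv zeta.
  destruct (merged_steps_frame n B (seq 1 (n - 1)) (exec (Priv 0 (next n 0) (1 + t1)) (initial p)))
    as (Htot & Hsh & Hlen).
  { intros i Hi; apply in_seq in Hi; lia. }
  set (s := fold_left _ _ _) in *.
  rewrite total_exec_ToShared, Htot, total_exec_Priv, length_log_exec by auto using next_lt with arith.
  cbn [exec shared]; rewrite Hsh, Hlen, length_log_exec, length_seq.
  cbn [exec shared initial log length]; repeat split; lia.
Qed.

Lemma merged_round_sum :
  sumZ p (seq 0 n) = 0 -> sumZ (bal merged) (seq 0 n) = - Z.of_nat n * B.
Proof.
  intros Hsum; destruct merged_round_frame as (Htot & Hsh & _).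
  unfold total in Htot; cbn [initial bal shared] in Htot; lia.
Qed.

Lemma merged_round_recoverable :
  sumZ p (seq 0 n) = 0 -> forall j, (j < n)%nat -> recoverable B (bal merged j).
Proof.
  intros Hsum [|j] Hj; destruct merged_round_balances as [Hothers Hlt0]; [|apply Hothers; lia].
  assert (Hdiv : (B | bal merged 0)).
  { pose proof (merged_round_sum Hsum) as Hbal.
    replace n with (S (n - 1)) in Hbal at 1 by lia.
    cbn [seq] in Hbal; rewrite sumZ_cons in Hbal.
    replace (bal merged 0) with (- Z.of_nat n * B - sumZ (bal merged) (seq 1 (n - 1))) by lia.
    apply Z.divide_sub_r; [apply Z.divide_factor_r|].
    apply sumZ_divide; intros i Hi; apply in_seq in Hi; apply Hothers; lia. }
  split; [apply (divide_lt_nonpos B); auto | exact Hdiv].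
Qed.

End MergedRound.

Lemma bal_withdrawals B i k s j :
  bal (Nat.iter k (exec (FromShared i B)) s) j
  = bal s j + (if Nat.eqb j i then Z.of_nat k * B else 0).
Proof.
  induction k as [|k IH]; [destruct (Nat.eqb j i); cbn; lia|].
  rewrite Nat.iter_succ; cbn [exec bal]; rewrite IH, Nat2Z.inj_succ.
  destruct (Nat.eqb j i); lia.
Qed.

Lemma shared_withdrawals B i k s :
  shared (Nat.iter k (exec (FromShared i B)) s) = shared s - Z.of_nat k * B.
Proof.
  induction k as [|k IH]; [cbn; lia|].
  rewrite Nat.iter_succ; cbn [exec shared]; rewrite IH, Nat2Z.inj_succ; lia.
Qed.

Lemma length_log_withdrawals B i k s :
  length (log (Nat.iter k (exec (FromShared i B)) s)) = (length (log s) + k)%nat.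
Proof.
  induction k as [|k IH]; [cbn; lia|].
  rewrite Nat.iter_succ, length_log_exec, IH; lia.
Qed.

(* Transactions are counted in units of B: each withdrawal moves exactly B. *)
Lemma recovery_step_spec B s i : 0 < B -> recoverable B (bal s i) ->
  (forall j, bal (recovery_step B s i) j = if Nat.eqb j i then 0 else bal s j) /\
  shared (recovery_step B s i) = shared s + bal s i /\
  Z.of_nat (length (log (recovery_step B s i))) * B
  = Z.of_nat (length (log s)) * B - bal s i.
Proof.
  intros HB [Hle [q Hq]]; unfold recovery_step.
  destruct (Z.ltb_spec (bal s i) 0).
  - assert (Hcount : Z.of_nat (Z.to_nat (- bal s i / B)) = - q).
    { rewrite Hq, <- Z.mul_opp_l, Z.div_mul by lia. apply Z2Nat.id; nia. }
    rewrite shared_withdrawals, length_log_withdrawals, Nat2Z.inj_add, Hcount.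
    repeat split; [|lia|lia].
    intros j; rewrite bal_withdrawals, Hcount.
    destruct (Nat.eqb_spec j i) as [->|]; lia.
  - repeat split; [|lia|lia].
    intros j; destruct (Nat.eqb_spec j i) as [->|]; lia.
Qed.

Lemma recovery_steps_spec B a c s : 0 < B ->
  (forall j, (a <= j < a + c)%nat -> recoverable B (bal s j)) ->
  (forall j, bal (fold_left (recovery_step B) (seq a c) s) j
             = if (Nat.leb a j && Nat.ltb j (a + c))%bool then 0 else bal s j) /\
  shared (fold_left (recovery_step B) (seq a c) s) = shared s + sumZ (bal s) (seq a c) /\
  Z.of_nat (length (log (fold_left (recovery_step B) (seq a c) s))) * B
  = Z.of_nat (length (log s)) * B - sumZ (bal s) (seq a c).
Proof.
  intros HB; revert a s; induction c as [|c IH]; intros a s Hrec; cbn [seq fold_left].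
  - repeat split; [|cbn; lia|cbn; lia].
    intros j; destruct (Nat.leb_spec a j), (Nat.ltb_spec j (a + 0)); cbn; lia.
  - destruct (recovery_step_spec B s a HB (Hrec a ltac:(lia))) as (Ebal & Esh & Elen).
    destruct (IH (S a) (recovery_step B s a)) as (Fbal & Fsh & Flen).
    { intros j Hj; rewrite Ebal; destruct (Nat.eqb_spec j a); [lia|]; apply Hrec; lia. }
    assert (Hsum : sumZ (bal (recovery_step B s a)) (seq (S a) c) = sumZ (bal s) (seq (S a) c)).
    { apply sumZ_ext; intros j Hj; apply in_seq in Hj.
      rewrite Ebal; destruct (Nat.eqb_spec j a); lia. }
    rewrite Hsum in Fsh, Flen; rewrite sumZ_cons.
    repeat split; [|lia|lia].
    intros j; rewrite Fbal, Ebal.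
    destruct (Nat.eqb_spec j a), (Nat.leb_spec (S a) j), (Nat.ltb_spec j (S a + c)),
      (Nat.leb_spec a j), (Nat.ltb_spec j (a + S c)); cbn; lia.
Qed.

Theorem theorem4 (n : nat) (B t1 : Z) (p : nat -> Z) :
  (2 <= n)%nat -> 0 < B ->
  setup_balances n B p ->
  0 <= t1 < B ->
  (forall i, (i < n)%nat -> bal (protocol n B t1 p) i = 0) /\
  shared (protocol n B t1 p) = 0 /\
  length (log (protocol n B t1 p)) = (2 * n + 1)%nat.
Proof.
  intros Hn HB [Hsum Hp] Ht1.
  pose proof (merged_round_recoverable n B t1 p Hn HB Hp Ht1 Hsum) as Hrec.
  pose proof (merged_round_sum n B t1 p Hn Hsum) as Hbal.
  destruct (merged_round_frame n B t1 p Hn) as (_ & Hshared & Hlen).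
  unfold protocol, recovery_round.
  destruct (recovery_steps_spec B 0 n (merged_round n B t1 (initial p)) HB)
    as (Hzero & Hsh & Hcount).
  { intros j Hj; apply Hrec; lia. }
  repeat split.
  - intros i Hi; rewrite Hzero; destruct (Nat.ltb_spec i (0 + n)); [reflexivity | lia].
  - rewrite Hsh, Hbal, Hshared; lia.
  - apply Nat2Z.inj, (Z.mul_cancel_r _ _ B); [lia|].
    rewrite Hcount, Hbal, Hlen; lia.
Qed.
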